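(* Let $R$ be a commutative ring with ${\rm char}(R)\neq 2$ and $R_2\neq\{0\}$. Let $G$ be a non-abelian group and $\varphi$ an involution on $G$. Then $(RG)^-_\varphi$ is commutative if and only if one of the following holds: \begin{enumerate} \item[(a)] $K=\langle g\in G\mid g\notin G_\varphi\rangle$ is abelian (and thus $G=K\cup Kx$ with $x\in G_\varphi$ and $\varphi(k)=xkx^{-1}$ for all $k\in K$), and $R_2^2=\{0\}$; \item[(b)] ${\rm char}(R)=4$, $|G'|=2$, $G/G'=(G/G')_\varphi$, $g^2\in G_\varphi$ for all $g\in G$, and $G_\varphi$ is commutative in case $R_2^2\neq\{0\}$. \end{enumerate}
   Context: An involution on a group $G$ is a map $\varphi:G\to G$ with $\varphi(gh)=\varphi(h)\varphi(g)$ and $\varphi^2=\mathrm{id}$, extended $R$-linearly to $RG$. $G_\varphi=\{g\in G\mid\varphi(g)=g\}$; $(RG)^-_\varphi=\{\alpha\in RG\mid\varphi(\alpha)=-\alpha\}$; $R_2=\{r\in R\mid 2r=0\}$; $R_2^2=\{0\}$ means $r_1r_2=0$ for all $r_1,r_2\in R_2$. $G'$ is the commutator subgroup; $G/G'=(G/G')_\varphi$ means $\varphi(g)G'=gG'$ for all $g\in G$. ''$G_\varphi$ is commutative'' means any two elements of $G_\varphi$ commute. *)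

(* Groups are possibly infinite: we use MathComp's
   [groupType] (boot/monoid.v), and the group ring RG is represented by
   formal finite sums (lists of coefficient/element pairs), compared
   coefficientwise. *)
From HB Require Import structures.
From mathcomp Require Import all_boot all_order all_algebra.
Set Implicit Arguments. Unset Strict Implicit. Unset Printing Implicit Defensive.
Import GRing.Theory.

Section GroupNotions.
Variable G : groupType.
Local Open Scope group_scope.

Inductive gen (S : G -> Prop) : G -> Prop :=
| gen_base x : S x -> gen S x
| gen_one : gen S 1
| gen_mul x y : gen S x -> gen S y -> gen S (x * y)
| gen_inv x : gen S x -> gen S x^-1.

Definition commutative_set (S : G -> Prop) : Prop :=
  forall x y, S x -> S y -> x * y = y * x.

Definition nonabelian : Prop := exists x y : G, x * y <> y * x.

Definition involution (phi : G -> G) : Prop :=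
  (forall g h, phi (g * h) = phi h * phi g) /\ (forall g, phi (phi g) = g).

Definition fixed_set (phi : G -> G) : G -> Prop := fun g => phi g = g.

Definition Ksub (phi : G -> G) : G -> Prop := gen (fun g => phi g <> g).

Definition derived : G -> Prop := gen (fun c => exists x y : G, c = [~ x, y]).

Definition two_elements (S : G -> Prop) : Prop :=
  exists a b : G, a <> b /\ forall g, S g <-> (g = a \/ g = b).

End GroupNotions.
Arguments derived G : clear implicits.
Arguments nonabelian G : clear implicits.

Section GroupRing.
Variables (R : comPzRingType) (G : groupType).
Local Open Scope ring_scope.

Definition grelt := seq (R * G).

Definition coef (a : grelt) (g : G) : R := \sum_(p <- a | p.2 == g) p.1.

Definition gr_eq (a b : grelt) : Prop := forall g, coef a g = coef b g.

Definition gr_mul (a b : grelt) : grelt :=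
  [seq (p.1 * q.1, (p.2 * q.2)%g) | p <- a, q <- b].

Definition gr_opp (a : grelt) : grelt := [seq (- p.1, p.2) | p <- a].

Definition gr_map (phi : G -> G) (a : grelt) : grelt := [seq (p.1, phi p.2) | p <- a].

Definition skew (phi : G -> G) (a : grelt) : Prop := gr_eq (gr_map phi a) (gr_opp a).

Definition skew_commutative (phi : G -> G) : Prop :=
  forall a b, skew phi a -> skew phi b -> gr_eq (gr_mul a b) (gr_mul b a).

End GroupRing.

Section RingNotions.
Variable R : comPzRingType.
Local Open Scope ring_scope.

Definition char_is (n : nat) : Prop :=
  if n is 0 then forall m, (0 < m)%N -> m%:R != 0 :> R
  else (n%:R = 0 :> R) /\ forall m, (0 < m < n)%N -> m%:R != 0 :> R.

Definition R2 (r : R) : Prop := r *+ 2 = 0.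

Definition R2sq_zero : Prop := forall r1 r2 : R, R2 r1 -> R2 r2 -> r1 * r2 = 0.

End RingNotions.

(* Every skew element of RG is a sum of basic ones: [r (g - phi g)] for a
   non-fixed [g], and [r h] for a fixed [h] and [2r = 0] ([skew_ind]).  So
   (RG)^-_phi is commutative iff basic elements commute pairwise
   ([skew_commutative_of_basic]).

   Forward direction: comparing coefficients in products of basic elements
   (using a nonzero [t] with [2t = 0] and [2 != 0]) yields two group-theoretic
   rules: [fixed_rule] relating non-fixed to fixed elements, and
   [nonfixed_rule] for non-commuting non-fixed pairs, which moreover forces
   [4 = 0].  Pure group theory then shows: if two non-fixed elements do not
   commute, the defect [s = g^-1 phi g] is a central involution with
   [G' = {1, s}], [G/G'] is fixed and all squares are fixed (case (b));
   otherwise [K] is abelian and [G_phi] is not commutative, whence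
   [R_2^2 = 0] (case (a)).

   Converse: under (a) or (b), each kind of pair of basic elements is checked
   to commute directly. *)

From Pilot Require Import Defs.
From HB Require Import structures.
From mathcomp Require Import all_boot all_order all_algebra.
Set Implicit Arguments. Unset Strict Implicit. Unset Printing Implicit Defensive.
Import GRing.Theory.
From Stdlib Require Import Classical.

Section Coefficients.
Variables (R : comPzRingType) (G : groupType).
Local Open Scope ring_scope.
Implicit Types (a b : grelt R G) (g x y : G) (r : R).

Lemma coef_nil g : coef ([::] : grelt R G) g = 0.
Proof. by rewrite /coef big_nil. Qed.

Lemma coef_cons r y a g :
  coef ((r, y) :: a) g = (if y == g then r else 0) + coef a g.
Proof. by rewrite /coef big_cons /=; case: (y == g); rewrite ?add0r. Qed.

Lemma coef_cat a b g : coef (a ++ b) g = coef a g + coef b g.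
Proof. by rewrite /coef big_cat. Qed.

Lemma coef_filter (f : pred G) a g :
  coef [seq p <- a | f p.2] g = if f g then coef a g else 0.
Proof.
elim: a => [|[r y] a IH]; first by rewrite /= !coef_nil; case: (f g).
rewrite /=; case fy: (f y); rewrite ?coef_cons IH; case: eqP => [<-|_];
  rewrite ?fy ?add0r //; by case: (f g); rewrite ?addr0.
Qed.

Lemma coef_opp a g : coef (gr_opp a) g = - coef a g.
Proof.
elim: a => [|[r y] a IH]; first by rewrite /= !coef_nil oppr0.
by rewrite /= !coef_cons IH opprD; case: eqP; rewrite ?oppr0.
Qed.

Lemma coef_mul a b g : coef (gr_mul a b) g =
  \sum_(p <- a) \sum_(q <- b) (if (p.2 * q.2)%g == g then p.1 * q.1 else 0).
Proof.
elim: a => [|[r y] a IH]; first by rewrite /= coef_nil big_nil.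
rewrite /= coef_cat IH big_cons /=; congr (_ + _).
elim: b {IH} => [|[t z] b IHb]; first by rewrite /= coef_nil big_nil.
by rewrite /= coef_cons IHb big_cons.
Qed.

Lemma coef_mull a b g :
  coef (gr_mul a b) g = \sum_(p <- a) p.1 * coef b (p.2^-1 * g)%g.
Proof.
rewrite coef_mul; apply: eq_bigr => -[r y] _ /=.
elim: b => [|[t z] b IH]; first by rewrite coef_nil big_nil mulr0.
rewrite big_cons coef_cons IH mulrDr /=; congr (_ + _).
have -> : ((y * z)%g == g) = (z == (y^-1 * g)%g).
  by apply/eqP/eqP => [<-|->]; [rewrite mulKg | rewrite mulVKg].
by case: eqP; rewrite ?mulr0.
Qed.

Lemma coef_mulr a b g :
  coef (gr_mul a b) g = \sum_(q <- b) coef a (g * q.2^-1)%g * q.1.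
Proof.
rewrite coef_mul exchange_big /=; apply: eq_bigr => -[t z] _ /=.
elim: a => [|[r y] a IH]; first by rewrite coef_nil big_nil mul0r.
rewrite big_cons coef_cons IH mulrDl /=; congr (_ + _).
have -> : ((y * z)%g == g) = (y == (g * z^-1)%g).
  by apply/eqP/eqP => [<-|->]; [rewrite mulgK | rewrite mulgVK].
by case: eqP; rewrite ?mul0r.
Qed.

End Coefficients.

Section TwoTorsion.
Variable V : zmodType.
Local Open Scope ring_scope.

Lemma opp_2torsion (v : V) : v *+ 2 = 0 -> - v = v.
Proof. by move=> v2; apply/esym/eqP; rewrite -addr_eq0 -mulr2n v2. Qed.

Lemma mulrn_2torsion (t : V) m : t *+ 2 = 0 -> t *+ m = t *+ odd m.
Proof.
move=> t2; rewrite -[in LHS](odd_double_half m) mulrnDr -muln2 mulnC mulrnA t2.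
by rewrite mul0rn addr0.
Qed.

Lemma mulrn_2torsion_inj (t : V) m n :
  t *+ 2 = 0 -> t != 0 -> t *+ m = t *+ n -> odd m = odd n.
Proof.
move=> t2 t_neq0; rewrite (mulrn_2torsion m t2) (mulrn_2torsion n t2).
by case: (odd m); case: (odd n) => //= /eqP;
  rewrite ?(negbTE t_neq0) // eq_sym (negbTE t_neq0).
Qed.

End TwoTorsion.

Section InvolutionFacts.
Variables (G : groupType) (phi : G -> G).
Hypothesis inv_phi : involution phi.
Local Open Scope group_scope.
Implicit Types (x y : G).

Lemma phiK x : phi (phi x) = x. Proof. by case: inv_phi. Qed.

Lemma phiM x y : phi (x * y) = phi y * phi x. Proof. by case: inv_phi. Qed.

Lemma phi_eq x y : (phi x == y) = (x == phi y).
Proof. by apply/eqP/eqP => [<-|->]; rewrite phiK. Qed.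

Lemma phi1 : phi 1 = 1.
Proof. by apply: (mulIg (phi 1)); rewrite mul1g -phiM mul1g. Qed.

Lemma phiV x : phi x^-1 = (phi x)^-1.
Proof. by apply/esym/mulg1_eq; rewrite -phiM mulVg phi1. Qed.

End InvolutionFacts.

Section SkewElements.
Variables (R : comPzRingType) (G : groupType) (phi : G -> G).
Hypothesis inv_phi : involution phi.
Local Open Scope ring_scope.
Implicit Types (a b : grelt R G) (g x y : G) (r t : R).

Lemma coef_map a g : coef (gr_map phi a) g = coef a (phi g).
Proof.
elim: a => [|[r y] a IH]; first by rewrite /= !coef_nil.
by rewrite /= !coef_cons IH phi_eq.
Qed.

Lemma skewP a : Defs.skew phi a <-> forall x, coef a (phi x) = - coef a x.
Proof.
split=> Sa x; first by have := Sa x; rewrite coef_map coef_opp.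
by rewrite coef_map coef_opp Sa.
Qed.

(* The two kinds of basic skew elements: [r g - r phi(g)], and [r h] with
   [h] fixed by [phi] and [2r = 0].  Every skew element is a sum of these. *)
Definition skew_pair r g : grelt R G := [:: (r, g); (- r, phi g)].
Definition single r g : grelt R G := [:: (r, g)].

Lemma skew_pairP r g : Defs.skew phi (skew_pair r g).
Proof.
apply/skewP => x; rewrite !coef_cons !coef_nil !addr0 [g == _]eq_sym phi_eq //.
rewrite [phi g == phi x]phi_eq // phiK // [x == phi g]eq_sym.
by case: (g == x); case: (phi g == x); rewrite ?opprD ?opprK ?oppr0 ?addr0 ?add0r // addrC.
Qed.

Lemma skew_singleP r h : phi h = h -> r *+ 2 = 0 -> Defs.skew phi (single r h).
Proof.
move=> hF r2; apply/skewP => x; rewrite !coef_cons !coef_nil !addr0.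
rewrite [h == _]eq_sym phi_eq // hF eq_sym.
by case: (h == x); rewrite ?oppr0 // opp_2torsion.
Qed.

(* Removing from a skew element all terms outside a [phi]-stable set keeps it
   skew; this is how a skew element is peeled into basic pieces. *)
Lemma skew_filter (f : pred G) a : (forall x, f (phi x) = f x) ->
  Defs.skew phi a -> Defs.skew phi [seq p <- a | f p.2].
Proof.
move=> f_stable /skewP Sa; apply/skewP => x.
by rewrite !coef_filter f_stable; case: (f x); rewrite ?Sa ?oppr0.
Qed.

Lemma size_filter_cons (f : pred G) r y a : ~~ f y ->
  (size [seq p <- (r, y) :: a | f p.2] <= size a)%N.
Proof. by move=> /negbTE /= ->; rewrite size_filter count_size. Qed.

Lemma skew_ind (Q : grelt R G -> Prop) :
  (forall a a', gr_eq a a' -> Q a -> Q a') ->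
  Q [::] ->
  (forall a1 a2, Q a1 -> Q a2 -> Q (a1 ++ a2)) ->
  (forall r g, phi g <> g -> Q (skew_pair r g)) ->
  (forall r h, phi h = h -> r *+ 2 = 0 -> Q (single r h)) ->
  forall a, Defs.skew phi a -> Q a.
Proof.
move=> Qeq Q0 Qcat Qpair Qsingle a.
elim: {a}(size a) {-2}a (leqnn (size a)) => [|n IH] [|[r y] a] //=; rewrite ltnS => sz Sa.
have /skewP Sa' := Sa; set c := coef ((r, y) :: a) y.
have [yF|yN] := eqVneq (phi y) y.
- have c2 : c *+ 2 = 0.
    by have := Sa' y; rewrite yF -/c => c_opp; rewrite mulr2n {1}c_opp addNr.
  pose other := predC1 y.
  apply: (Qeq (single c y ++ [seq p <- (r, y) :: a | other p.2])).
    move=> g; rewrite /single coef_cat coef_filter coef_cons coef_nil addr0.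
    rewrite /other /= [g == y]eq_sym.
    by case: (eqVneq y g) => [<-|_] /=; rewrite ?addr0 ?add0r.
  apply: Qcat; first exact: Qsingle.
  apply: IH; first by apply: (leq_trans _ sz); apply: size_filter_cons; rewrite /other /= eqxx.
  by apply: skew_filter Sa => x; rewrite /other /= (phi_eq inv_phi) yF.
- pose other : pred G := fun z => (z != y) && (z != phi y).
  apply: (Qeq (skew_pair c y ++ [seq p <- (r, y) :: a | other p.2])).
    move=> g; rewrite /skew_pair coef_cat coef_filter (coef_cons c) (coef_cons (- c)).
    rewrite coef_nil addr0 /other /=.
    case: (eqVneq y g) => [<-|_]; first by rewrite (negbTE yN) /= !addr0.
    case: (eqVneq (phi y) g) => [<-|_] /=; last by rewrite !add0r.
    by rewrite addr0 add0r /c Sa'.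
  apply: Qcat; first by apply: Qpair; apply/eqP.
  apply: IH; first by apply: (leq_trans _ sz); apply: size_filter_cons; rewrite /other /= eqxx.
  by apply: skew_filter Sa => x; rewrite /other !(phi_eq inv_phi) (phiK inv_phi) andbC.
Qed.

End SkewElements.

Section Commuting.
Variables (R : comPzRingType) (G : groupType).
Local Open Scope ring_scope.
Implicit Types (a b : grelt R G).

Definition gr_commute a b : Prop := gr_eq (gr_mul a b) (gr_mul b a).

Lemma gr_commute_sym a b : gr_commute a b -> gr_commute b a.
Proof. by move=> ab g; rewrite ab. Qed.

Lemma gr_mul_eql a a' b : gr_eq a a' -> gr_eq (gr_mul a b) (gr_mul a' b).
Proof. by move=> E g; rewrite !coef_mulr; apply: eq_bigr => q _; rewrite E. Qed.

Lemma gr_mul_eqr a b b' : gr_eq b b' -> gr_eq (gr_mul a b) (gr_mul a b').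
Proof. by move=> E g; rewrite !coef_mull; apply: eq_bigr => p _; rewrite E. Qed.

Lemma gr_commute_eql a a' b : gr_eq a a' -> gr_commute a b -> gr_commute a' b.
Proof.
by move=> E ab g; rewrite -(gr_mul_eql _ E) ab (gr_mul_eqr _ E).
Qed.

Lemma gr_mul_catl a1 a2 b g :
  coef (gr_mul (a1 ++ a2) b) g = coef (gr_mul a1 b) g + coef (gr_mul a2 b) g.
Proof. by rewrite !coef_mull big_cat. Qed.

Lemma gr_mul_catr a b1 b2 g :
  coef (gr_mul a (b1 ++ b2)) g = coef (gr_mul a b1) g + coef (gr_mul a b2) g.
Proof. by rewrite !coef_mulr big_cat. Qed.

Lemma gr_commute_catl a1 a2 b :
  gr_commute a1 b -> gr_commute a2 b -> gr_commute (a1 ++ a2) b.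
Proof. by move=> a1b a2b g; rewrite gr_mul_catl gr_mul_catr a1b a2b. Qed.

Lemma gr_commute_nil b : gr_commute [::] b.
Proof.
by move=> g; rewrite coef_mull coef_mulr !big_nil.
Qed.

End Commuting.

Section BasicReduction.
Variables (R : comPzRingType) (G : groupType) (phi : G -> G).
Hypothesis inv_phi : involution phi.
Local Open Scope ring_scope.

Lemma skew_commutative_of_basic :
  (forall (r t : R) (g h : G), phi g <> g -> phi h <> h ->
     gr_commute (skew_pair phi r g) (skew_pair phi t h)) ->
  (forall (r t : R) (g h : G), phi g <> g -> phi h = h -> t *+ 2 = 0 ->
     gr_commute (skew_pair phi r g) (single t h)) ->
  (forall (r t : R) (g h : G), phi g = g -> phi h = h -> r *+ 2 = 0 -> t *+ 2 = 0 ->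
     gr_commute (single r g) (single t h)) ->
  skew_commutative R phi.
Proof.
move=> pair_pair pair_single single_single a b Sa Sb.
have commute_with_skew a0 :
    (forall (r : R) g, phi g <> g -> gr_commute a0 (skew_pair phi r g)) ->
    (forall (t : R) h, phi h = h -> t *+ 2 = 0 -> gr_commute a0 (single t h)) ->
    forall b0, Defs.skew phi b0 -> gr_commute a0 b0.
  move=> Cpair Csingle; apply: (skew_ind inv_phi) => //.
  - by move=> b1 b2 E /gr_commute_sym C; apply/gr_commute_sym/(gr_commute_eql E).
  - exact/gr_commute_sym/gr_commute_nil.
  - by move=> b1 b2 /gr_commute_sym C1 /gr_commute_sym C2;
      apply/gr_commute_sym/gr_commute_catl.
move: a Sa b Sb; apply: (skew_ind inv_phi).
- by move=> a1 a2 E C b Sb; apply: (gr_commute_eql E); apply: C.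
- by move=> b _; apply: gr_commute_nil.
- by move=> a1 a2 C1 C2 b Sb; apply: gr_commute_catl; [apply: C1 | apply: C2].
- move=> r g gN; apply: commute_with_skew => [t h hN|t h hF t2].
  + exact: pair_pair.
  + exact: pair_single.
- move=> r g gF r2; apply: commute_with_skew => [t h hN|t h hF t2].
  + exact/gr_commute_sym/pair_single.
  + exact: single_single.
Qed.

End BasicReduction.

Section CommutationRules.
Variables (G : groupType) (phi : G -> G).
Hypothesis inv_phi : involution phi.
Local Open Scope group_scope.
Implicit Types (g h x y z : G).

(* The relation between a non-fixed [g] and a fixed [h] that commutativity of
   (RG)^-_phi forces: [h] commutes with both [g] and [phi g], or conjugation
   by [h] exchanges them. *)
Definition fixed_relation g h : Prop :=
  (g * h = h * g /\ h * phi g = phi g * h) \/ (g * h = h * phi g /\ h * g = phi g * h).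

Definition fixed_rule : Prop :=
  forall g h, phi g <> g -> phi h = h -> fixed_relation g h.

Definition nonfixed_rule : Prop := forall g h, phi g <> g -> phi h <> h ->
  g * h <> h * g -> [/\ g * h = phi g * phi h, g * h = h * phi g & g * h = phi h * g].

(* The defect [g^-1 phi(g)] measures how far [g] is from being fixed; it is
   locked so that group rewriting does not unfold it. *)
Definition defect g : G := locked (g^-1 * phi g).

Lemma mul_defect g : g * defect g = phi g.
Proof. by rewrite /defect -lock mulVKg. Qed.

Hypotheses (fixedR : fixed_rule) (nonfixedR : nonfixed_rule).

Section NonCommutingPair.
Variables g h : G.
Hypotheses (gN : phi g <> g) (hN : phi h <> h) (gh : g * h <> h * g).
Local Notation s := (defect g).

Let hg : h * g <> g * h. Proof. by move=> E; apply: gh. Qed.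

Let phi_g : phi g = g * s. Proof. by rewrite mul_defect. Qed.

Let phi_h : phi h = s * h.
Proof.
have [_ hg_hpg hg_pgh] := nonfixedR hN gN hg.
by apply: (mulgI g); rewrite mulgA -phi_g -hg_pgh.
Qed.

Lemma defect_sqr : s * s = 1.
Proof.
have [gh_pp _ _] := nonfixedR gN hN gh.
move: gh_pp; rewrite phi_g phi_h !mulgA => /(mulIg h).
by rewrite -mulgA -{1}[g]mulg1 => /(mulgI g) /esym.
Qed.

Let sV : s^-1 = s. Proof. by apply: mulg1_eq; rewrite defect_sqr. Qed.

Let s_h : s * h = h * s.
Proof.
have [_ gh_hpg _] := nonfixedR gN hN gh; have [_ _ hg_pgh] := nonfixedR hN gN hg.
move: gh_hpg; rewrite phi_g mulgA hg_pgh phi_g -!mulgA => /(mulgI g) E.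
by rewrite {1}E !mulgA defect_sqr mul1g.
Qed.

Let s_g : s * g = g * s.
Proof.
have [_ _ gh_phg] := nonfixedR gN hN gh; have [_ _ hg_pgh] := nonfixedR hN gN hg.
move: gh_phg; rewrite phi_h -mulgA hg_pgh phi_g !mulgA => /(mulIg h) E.
by rewrite [X in _ = X * _]E -(mulgA _ s s) defect_sqr mulg1.
Qed.

Let phi_h_right : phi h = h * s. Proof. by rewrite phi_h s_h. Qed.

Lemma defect_neq1 : s <> 1.
Proof. by move=> s1; apply: gN; rewrite phi_g s1 mulg1. Qed.

Lemma commg_pair : [~ g, h] = s.
Proof.
have [_ gh_hpg _] := nonfixedR gN hN gh.
by rewrite /commg /conjg gh_hpg mulKg /defect -lock.
Qed.

Let defect_transfer x y : phi y <> y -> phi y = y * s -> phi x <> x ->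
  x * y <> y * x -> phi x = x * s.
Proof.
move=> yN phi_y xN xy.
have [_ xy_ypx _] := nonfixedR xN yN xy.
have [_ yx_xpy _] := nonfixedR yN xN (fun E => xy (esym E)).
by apply: (mulgI y); rewrite -xy_ypx mulgA yx_xpy phi_y -!mulgA defect_sqr mulg1.
Qed.

Lemma phi_nonfixed x : phi x <> x -> phi x = x * s.
Proof.
move=> xN.
have [xg|/eqP xg] := eqVneq (x * g) (g * x); last exact: defect_transfer gN phi_g xN xg.
have [xh|/eqP xh] := eqVneq (x * h) (h * x); last first.
  exact: defect_transfer hN phi_h_right xN xh.
have xs : x * s = s * x.
  rewrite -commg_pair /commg /conjg; apply: commuteM; first exact/commuteV.
  by apply: commuteM; [exact/commuteV | exact: commuteM].
(* [xg] does not commute with [h]; compare the defects of [x g] and [g] *)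
have xgh : x * g * h <> h * (x * g).
  by move=> E; apply: gh; apply: (mulgI x); rewrite mulgA E mulgA -xh -mulgA.
have [xgF|/eqP xgN] := eqVneq (phi (x * g)) (x * g).
  move: xgF; rewrite phiM // phi_g xg -!mulgA => /(mulgI g) E.
  by apply: (mulgI s); rewrite E xs mulgA defect_sqr mul1g.
move: (defect_transfer hN phi_h_right xgN xgh).
by rewrite phiM // phi_g xg -!mulgA => /(mulgI g); rewrite xs => /(mulgI s).
Qed.

Lemma phi_defect : phi s = s.
Proof.
by rewrite {1}/defect -lock phiM // phiV // phiK // phi_g invgM sV mulgA -s_g mulgK.
Qed.

(* [s] is central: for fixed [x] by [fixed_rule], otherwise since
   [x s = phi x] and [s] is fixed. *)
Lemma defect_central x : x * s = s * x.
Proof.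
have conj_s y : y = s * y * s -> y * s = s * y.
  by move=> {1}->; rewrite -mulgA defect_sqr mulg1.
have [xF|/eqP xN] := eqVneq (phi x) x.
  have [[gx xpg]|[gx xg]] := fixedR gN xF.
    by move: xpg; rewrite phi_g mulgA -gx -!mulgA => /(mulgI g) /esym.
  apply: conj_s; move: gx; rewrite phi_g mulgA xg phi_g -!mulgA.
  by move=> /(mulgI g); rewrite !mulgA.
apply: conj_s; rewrite -{1}(phiK inv_phi x) (phi_nonfixed xN) phiM // phi_defect.
by rewrite (phi_nonfixed xN) mulgA.
Qed.

Lemma commg_1_or_defect x y : [~ x, y] = 1 \/ [~ x, y] = s.
Proof.
have [xy|xy] := eqVneq (x * y) (y * x); first by left; apply/eqP/commgP.
right; suff xy_s : x * y = y * x * s by rewrite /commg /conjg xy_s -!mulgA !mulKg.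
have yx : y * x <> x * y by move=> E; move/eqP: xy; apply.
have [xF|/eqP xN] := eqVneq (phi x) x; have [yF|/eqP yN] := eqVneq (phi y) y.
- have xyN : phi (x * y) <> x * y by rewrite phiM // xF yF.
  by move: (phi_nonfixed xyN); rewrite phiM // xF yF => ->; rewrite -mulgA defect_sqr mulg1.
- have [[/yx []]|[_ ->]] := fixedR yN xF.
  by rewrite (phi_nonfixed yN) -mulgA -defect_central mulgA.
- have [[/eqP /(negP xy) []]|[-> _]] := fixedR xN yF.
  by rewrite (phi_nonfixed xN) mulgA.
- have [_ -> _] := nonfixedR xN yN (elimN eqP xy).
  by rewrite (phi_nonfixed xN) mulgA.
Qed.

Lemma derived_1_or_defect z : derived G z -> z = 1 \/ z = s.
Proof.
elim=> {z} [c [x [y ->]]|| x y _ [->|->] _ [->|->] | x _ [->|->]].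
- exact: commg_1_or_defect.
- by left.
- by left; rewrite mulg1.
- by right; rewrite mul1g.
- by right; rewrite mulg1.
- by left; rewrite defect_sqr.
- by left; rewrite invg1.
- by right; rewrite sV.
Qed.

Lemma defect_derived : derived G s.
Proof. by apply: gen_base; exists g, h; rewrite commg_pair. Qed.

Lemma derived_two_elements : two_elements (derived G).
Proof.
exists 1, s; split=> [s1|z]; first exact/defect_neq1/esym.
split; first exact: derived_1_or_defect.
by case=> ->; [exact: gen_one | exact: defect_derived].
Qed.

Lemma defect_in_derived x : derived G (x^-1 * phi x).
Proof.
have [->|/eqP xN] := eqVneq (phi x) x; first by rewrite mulVg; exact: gen_one.
by rewrite (phi_nonfixed xN) mulKg; exact: defect_derived.
Qed.

Lemma square_fixed x : fixed_set phi (x * x).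
Proof.
rewrite /fixed_set phiM //; have [->|/eqP xN] := eqVneq (phi x) x => //.
by rewrite (phi_nonfixed xN) -mulgA (mulgA s) -defect_central -mulgA defect_sqr mulg1.
Qed.

End NonCommutingPair.

Lemma gen_commutative (S : G -> Prop) :
  commutative_set S -> commutative_set (gen S).
Proof.
move=> comS.
have com_gen x y : S x -> gen S y -> x * y = y * x.
  move=> Sx; elim=> {y} [y Sy|| y z _ xy _ xz | y _ xy].
  - exact: comS.
  - by rewrite mulg1 mul1g.
  - exact: commuteM.
  - exact: commuteV.
move=> x y; elim=> {x} [x Sx|| x z _ xy _ zy | x _ xy] Gy.
- exact: com_gen.
- by rewrite mulg1 mul1g.
- by apply/esym/commuteM; apply/esym; [exact: xy | exact: zy].
- by apply/esym/commuteV/esym; exact: xy.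
Qed.

Lemma fixed_noncommutative : nonabelian G ->
  (forall x y, phi x <> x -> phi y <> y -> x * y = y * x) ->
  ~ commutative_set (fixed_set phi).
Proof.
move=> [x [y xy]] comN comF.
have com_mixed u v : phi u <> u -> phi v = v -> u * v = v * u.
  move=> uN vF; have [[uv _]|[uv vu]] := fixedR uN vF => //.
  have uvF : fixed_set phi (u * v) by rewrite /fixed_set phiM // vF -uv.
  by move: (comF _ _ vF uvF); rewrite !mulgA => /(mulIg v) /esym.
have [xF|/eqP xN] := eqVneq (phi x) x; have [yF|/eqP yN] := eqVneq (phi y) y.
- exact: xy (comF _ _ xF yF).
- exact/xy/esym/com_mixed.
- exact: xy (com_mixed _ _ xN yF).
- exact: xy (comN _ _ xN yN).
Qed.

End CommutationRules.

Section BasicCommutation.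
Variables (R : comPzRingType) (G : groupType) (phi : G -> G).
Local Open Scope ring_scope.

Lemma single_commute_of_R2sq (r t : R) (g h : G) : R2sq_zero R -> r *+ 2 = 0 -> t *+ 2 = 0 ->
  gr_commute (single r g) (single t h).
Proof.
move=> R2sq r2 t2 x.
by rewrite /gr_mul /single /= !coef_cons !coef_nil (mulrC t r) (R2sq _ _ r2 t2) !if_same.
Qed.

Lemma single_commute_of_commute (r t : R) (g h : G) : (g * h = h * g)%g ->
  gr_commute (single r g) (single t h).
Proof.
by move=> gh x; rewrite /gr_mul /single /= !coef_cons !coef_nil gh (mulrC t r).
Qed.

Lemma pair_single_commute (r t : R) (g h : G) : t *+ 2 = 0 ->
  fixed_relation phi g h ->
  gr_commute (skew_pair phi r g) (single t h).
Proof.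
move=> t2 rule x; have rt2 : (r * t) *+ 2 = 0 by rewrite -mulrnAr t2 mulr0.
rewrite /gr_mul /skew_pair /single /= !coef_cons !coef_nil !mulNr !mulrN.
rewrite (mulrC t r) (opp_2torsion rt2).
by case: rule => -[c1 c2]; rewrite ?c1 ?c2 // -c1 !addr0 addrC.
Qed.

End BasicCommutation.

Section SmallIntegers.
Variable R : comPzRingType.
Local Open Scope ring_scope.

Lemma one_neq0_of_2torsion (t : R) : t != 0 -> (1 : R) != 0.
Proof. by apply: contraNneq => E; rewrite -[t]mulr1 E mulr0. Qed.

Lemma three_neq0_of_2torsion (t : R) : t *+ 2 = 0 -> t != 0 -> 3%:R != 0 :> R.
Proof.
move=> t2 t_neq0; apply/eqP => z3; move/eqP: t_neq0; apply.
by have := congr1 (fun x => t * x) z3; rewrite mulr0 mulr_natr mulrS t2 addr0.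
Qed.

Lemma natr_eq_small (m n : nat) : (m <= 4)%N -> (n <= 4)%N ->
  (1 : R) != 0 -> 2%:R != 0 :> R -> 3%:R != 0 :> R ->
  m%:R = n%:R :> R ->
  m = n \/ (4%:R = 0 :> R /\ [|| (m == 4%N) && (n == 0%N) | (m == 0%N) && (n == 4%N)]).
Proof.
move=> m4 n4 n1 n2 n3.
wlog le_nm : m n m4 n4 / (n <= m)%N.
  move=> W E; case: (leqP n m) => [le|/ltnW le]; first exact: W.
  case: (W n m n4 m4 le (esym E)) => [->|[h1 h2]]; first by left.
  by right; split => //; rewrite orbC andbC [X in _ || X]andbC.
move=> E; have : ((m - n)%N)%:R = 0 :> R by rewrite natrB // E subrr.
have : (m - n <= 4)%N by apply: leq_trans (leq_subr _ _) m4.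
have := subnK le_nm.
case: (m - n)%N => [|[|[|[|[|k]]]]] //= mE _ Z.
- by left; rewrite -mE.
- by move: n1; rewrite -Z mulr1n eqxx.
- by move: n2; rewrite Z eqxx.
- by move: n3; rewrite Z eqxx.
- right; split => //; rewrite -mE in m4 *.
  by move: m4; case: n {E le_nm mE n4} => [|n] //; rewrite addnS ltnNge leq_addr.
Qed.

Lemma char4 : (1 : R) != 0 -> 2%:R != 0 :> R -> 3%:R != 0 :> R ->
  4%:R = 0 :> R -> char_is R 4.
Proof.
move=> n1 n2 n3 z4; split => // m /andP [m0 m4].
by case: m m0 m4 => [|[|[|[|m]]]] //= _ _; rewrite ?mulr1n.
Qed.

Lemma two_neq0 : (1 : R) != 0 -> ~ char_is R 2 -> 2%:R != 0 :> R.
Proof.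
move=> n1 nchar2; apply/eqP => z2; apply: nchar2; split => // m /andP [m0 m2].
by case: m m0 m2 => [|[|]] //= _ _; rewrite mulr1n.
Qed.

End SmallIntegers.

Section Forward.
Variables (R : comPzRingType) (G : groupType) (phi : G -> G).
Hypothesis inv_phi : involution phi.
Hypothesis skew_comm : skew_commutative R phi.
Local Open Scope ring_scope.

Let bool_ind (t : R) (b : bool) : (if b then t else 0) = t *+ b.
Proof. by case: b. Qed.

(* If [R_2^2 != 0] then [G_phi] is commutative: for [r1, r2] in [R_2] with
   [r1 r2 != 0] and fixed [x, y], the coefficient of [x y] is [r1 r2] in
   [(r1 x)(r2 y)] but [0] in [(r2 y)(r1 x)] unless [x y = y x]. *)
Lemma fixed_commute_of_R2 : ~ R2sq_zero R -> commutative_set (fixed_set phi).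
Proof.
move=> R2sq x y xF yF; have [//|xy] := eqVneq (x * y)%g (y * x)%g.
case: R2sq => r1 r2 r1_2 r2_2.
move: (skew_comm (skew_singleP inv_phi xF r1_2) (skew_singleP inv_phi yF r2_2) (x * y)%g).
by rewrite /gr_mul /single /= !coef_cons !coef_nil eqxx eq_sym (negbTE xy) !addr0.
Qed.

Let signed_sum (a b c d : nat) :
  a%:R + (- b%:R + (- c%:R + d%:R)) = (a + d)%:R - (b + c)%:R :> R.
Proof. by rewrite !natrD opprD -!addrA; congr (_ + _); rewrite addrA addrC. Qed.

Variable t : R.
Hypotheses (t2 : t *+ 2 = 0) (t_neq0 : t != 0).

(* For [g] non-fixed and [h] fixed, [g - phi(g)] commutes with [t h]; since
   [t] has order 2, comparing coefficients modulo 2 yields [fixed_rule]. *)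
Lemma forward_fixed_rule : fixed_rule phi.
Proof.
move=> g h gN hF.
have C := skew_comm (skew_pairP inv_phi 1 g) (skew_singleP inv_phi hF t2).
have parity x : odd (((g * h)%g == x) + ((phi g * h)%g == x)) =
                odd (((h * g)%g == x) + ((h * phi g)%g == x)).
  apply: (mulrn_2torsion_inj t2 t_neq0); rewrite !mulrnDr -!bool_ind.
  move: (C x); rewrite /gr_mul /skew_pair /single /= !coef_cons coef_nil !addr0.
  by rewrite mul1r mulN1r mulr1 mulrN1 (opp_2torsion t2).
have ne : ((phi g * h)%g == (g * h)%g) = false by apply/eqP => /(mulIg h).
have := parity (phi g * h)%g; rewrite eqxx eq_sym ne.
have := parity (g * h)%g; rewrite eqxx ne.
have [E1|n1] := eqVneq (h * g)%g (g * h)%g;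
  have [E2|n2] := eqVneq (h * phi g)%g (g * h)%g => //= _.
- rewrite E1 [(g * h)%g == _]eq_sym ne add0n; case: eqP => // E3 _; by left.
- rewrite E2 [(g * h)%g == _]eq_sym ne addn0; case: eqP => // E3 _; by right.
Qed.

Hypothesis two_neq0 : 2%:R != 0 :> R.

(* The coefficient of [g h] in each product is an integer count of
   at most four coinciding products; as [1, 2, 3 != 0], the counts agree only
   if all three identities of [nonfixed_rule] hold and [4 = 0] (the case
   where only [g h = phi(h) phi(g)] holds is excluded by [fixed_rule]). *)
Lemma forward_nonfixed g h : phi g <> g -> phi h <> h -> (g * h <> h * g)%g ->
  [/\ (g * h = phi g * phi h)%g, (g * h = h * phi g)%g, (g * h = phi h * g)%g
    & 4%:R = 0 :> R].
Proof.
move=> gN hN gh.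
have C := skew_comm (skew_pairP inv_phi 1 g) (skew_pairP inv_phi 1 h).
have coef_count x : ((((g * h)%g == x) + ((phi g * phi h)%g == x))
                + (((h * phi g)%g == x) + ((phi h * g)%g == x)))%N%:R =
               ((((h * g)%g == x) + ((phi h * phi g)%g == x))
                + (((g * phi h)%g == x) + ((phi g * h)%g == x)))%N%:R :> R.
  move: (C x); rewrite /gr_mul /skew_pair /= !coef_cons !coef_nil !addr0.
  rewrite !mulrNN !mulr1 !mul1r !bool_ind !mulNrn !signed_sum => /eqP.
  by rewrite subr_eq addrAC eq_sym subr_eq -!natrD => /eqP.
have f1 : ((h * g)%g == (g * h)%g) = false by apply/eqP => E; apply: gh.
have f2 : ((g * phi h)%g == (g * h)%g) = false by apply/eqP => /(mulgI g).
have f3 : ((phi g * h)%g == (g * h)%g) = false by apply/eqP => /(mulIg h).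
have := coef_count (g * h)%g; rewrite eqxx f1 f2 f3 => E.
have bound (a b c d : bool) : (a + b + (c + d) <= 4)%N by case: a; case: b; case: c; case: d.
have := natr_eq_small (bound _ _ _ _) (bound _ _ _ _)
  (one_neq0_of_2torsion t_neq0) two_neq0 (three_neq0_of_2torsion t2 t_neq0) E.
have [e1|n1] := eqVneq (phi g * phi h)%g (g * h)%g;
have [e2|n2] := eqVneq (h * phi g)%g (g * h)%g;
have [e3|n3] := eqVneq (phi h * g)%g (g * h)%g;
have [e4|n4] := eqVneq (phi h * phi g)%g (g * h)%g;
move=> [/eqP|[z4 /= c]] //=.
have ghF : phi (g * h)%g = (g * h)%g by rewrite phiM // e4.
have [[E' _]|[E' _]] := forward_fixed_rule gN ghF.
  by case: gh; move: E'; rewrite -mulgA => /(mulgI g).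
by move: E'; rewrite -mulgA => /(mulgI g) E'; rewrite -E' eqxx in n2.
Qed.

Lemma forward_nonfixed_rule : nonfixed_rule phi.
Proof. by move=> g h gN hN gh; case: (forward_nonfixed gN hN gh). Qed.

End Forward.

Section ConverseA.
Variables (R : comPzRingType) (G : groupType) (phi : G -> G).
Hypothesis inv_phi : involution phi.
Hypotheses (K_comm : commutative_set (Ksub phi)) (R2sq : R2sq_zero R).
Local Open Scope ring_scope.

Let K_nonfixed x : phi x <> x -> Ksub phi x. Proof. exact: gen_base. Qed.

Let K_phi_nonfixed x : phi x <> x -> Ksub phi (phi x).
Proof. by move=> xN; apply: gen_base; rewrite (phiK inv_phi) => /esym. Qed.

(* If [K] is abelian, [fixed_rule] holds: either [h] lies in [K] (and
   commutes with [g] and [phi(g)]), or both [g h] and [h g] are fixed. *)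
Lemma fixed_rule_of_K : fixed_rule phi.
Proof.
move=> g h gN hF.
have inK : Ksub phi h -> (g * h = h * g /\ h * phi g = phi g * h)%g.
  by move=> Kh; split; apply: K_comm => //; [exact: K_nonfixed | exact: K_phi_nonfixed].
have [ghF|/eqP ghN] := eqVneq (phi (g * h)%g) (g * h)%g; last first.
  left; apply: inK; rewrite -(mulKg g h).
  by apply: gen_mul; [apply/gen_inv/K_nonfixed | exact: K_nonfixed].
have [hgF|/eqP hgN] := eqVneq (phi (h * g)%g) (h * g)%g; last first.
  left; apply: inK; rewrite -(mulgK g h).
  by apply: gen_mul; [exact: K_nonfixed | apply/gen_inv/K_nonfixed].
by right; move: ghF hgF; rewrite !phiM // hF => -> ->.
Qed.

Lemma pair_pair_commute_a (r t : R) g h : phi g <> g -> phi h <> h ->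
  gr_commute (skew_pair phi r g) (skew_pair phi t h).
Proof.
move=> gN hN x.
have c1 : (h * g = g * h)%g by apply: K_comm; apply: K_nonfixed.
have c2 : (h * phi g = phi g * h)%g.
  by apply: K_comm; [exact: K_nonfixed | exact: K_phi_nonfixed].
have c3 : (phi h * g = g * phi h)%g.
  by apply: K_comm; [exact: K_phi_nonfixed | exact: K_nonfixed].
have c4 : (phi h * phi g = phi g * phi h)%g by apply: K_comm; exact: K_phi_nonfixed.
rewrite /gr_mul /skew_pair /= !coef_cons !coef_nil c1 c2 c3 c4.
by rewrite !mulrN !mulNr !opprK (mulrC t r); congr (_ + _); exact: addrCA.
Qed.

End ConverseA.

Lemma skew_commutative_a (R : comPzRingType) (G : groupType) (phi : G -> G) :
  involution phi -> commutative_set (Ksub phi) -> R2sq_zero R ->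
  skew_commutative R phi.
Proof.
move=> inv_phi K_comm R2sq; apply: (skew_commutative_of_basic inv_phi).
- by move=> *; apply: pair_pair_commute_a.
- by move=> r t g h gN hF t2; apply: pair_single_commute t2 _; exact: fixed_rule_of_K.
- by move=> r t g h _ _; apply: single_commute_of_R2sq.
Qed.

Section DerivedOfOrderTwo.
Variables (G : groupType) (s : G).
Hypotheses (s_neq1 : s <> 1%g) (derivedE : forall z, derived G z <-> z = 1%g \/ z = s).
Local Open Scope group_scope.
Implicit Types (x y : G).

Lemma derived_sqr : s * s = 1.
Proof.
have : derived G (s * s) by apply: gen_mul; apply/derivedE; right.
by case/derivedE => // ss; case: s_neq1; apply: (mulgI s); rewrite mulg1.
Qed.

Lemma commg_derived x y : [~ x, y] = 1 \/ [~ x, y] = s.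
Proof. by apply/derivedE; apply: gen_base; exists x, y. Qed.

Lemma derived_central x : x * s = s * x.
Proof.
have [/eqP/commgP //|] := commg_derived s x.
rewrite /commg /conjg => /(congr1 (fun z => s * z)); rewrite mulVKg derived_sqr.
move=> /(congr1 (fun z => x * z)); rewrite mulVKg mulg1 -{2}[x]mul1g.
by move=> /(mulIg x) /s_neq1 [].
Qed.

Lemma noncommuting_derived x y : x * y <> y * x -> x * y = y * x * s.
Proof.
move=> xy; have [/eqP/commgP //|] := commg_derived x y.
rewrite /commg /conjg => /(congr1 (fun z => x * z)); rewrite mulVKg.
by move=> /(congr1 (fun z => y * z)); rewrite mulVKg mulgA.
Qed.

End DerivedOfOrderTwo.

Section ConverseB.
Variables (R : comPzRingType) (G : groupType) (phi : G -> G).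
Hypothesis inv_phi : involution phi.
Variable s : G.
Hypotheses (s_neq1 : s <> 1%g) (derivedE : forall z, derived G z <-> z = 1%g \/ z = s).
Hypothesis quotient_fixed : forall x : G, derived G (x^-1 * phi x)%g.
Local Open Scope ring_scope.

Let s_sqr := derived_sqr s_neq1 derivedE.
Let s_central := derived_central s_neq1 derivedE.
Let s_noncomm := noncommuting_derived derivedE.

(* Since [G/G'] is fixed, every non-fixed element has defect [s]; this gives
   [fixed_rule] as in the forward direction. *)
Lemma phi_nonfixed_b x : phi x <> x -> phi x = (x * s)%g.
Proof.
move=> xN; case/derivedE: (quotient_fixed x) => [x1|]; last by move <-; rewrite mulVKg.
by case: xN; apply: (mulgI x^-1%g); rewrite x1 mulVg.
Qed.

Lemma fixed_rule_b : fixed_rule phi.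
Proof.
move=> g h gN hF; rewrite /fixed_relation (phi_nonfixed_b gN).
have [gh|/eqP gh] := eqVneq (g * h)%g (h * g)%g.
  by left; split=> //; rewrite mulgA -gh -mulgA (s_central h) mulgA.
right; rewrite (s_noncomm gh) mulgA; split=> //.
have hg : (h * g <> g * h)%g by move=> E; apply: gh.
by rewrite (s_noncomm hg) -!mulgA s_central.
Qed.

Hypothesis four0 : 4%:R = 0 :> R.

Let double_opp (u : R) : u + u = - u + - u.
Proof.
rewrite -opprD; apply/eqP; rewrite -addr_eq0.
have -> : u + u + (u + u) = u * 4%:R by rewrite mulr_natr !mulrS mulr0n addr0 !addrA.
by rewrite four0 mulr0.
Qed.

(* Two basic elements of the first kind commute: writing [phi(x) = x s],
   the products only differ when [g h = h g s], and then by coefficients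
   [u + u] against [- u - u], which agree as [4 = 0]. *)
Lemma pair_pair_commute_b (r t : R) g h : phi g <> g -> phi h <> h ->
  gr_commute (skew_pair phi r g) (skew_pair phi t h).
Proof.
move=> gN hN x.
have ss a b : (a * s * (b * s) = a * b)%g.
  by rewrite -mulgA (mulgA s) -s_central -mulgA s_sqr mulg1.
have s_right a b : (a * s * b = a * b * s)%g by rewrite -mulgA -s_central mulgA.
rewrite /gr_mul /skew_pair /= !coef_cons !coef_nil (phi_nonfixed_b gN) (phi_nonfixed_b hN).
rewrite !ss !mulgA !s_right !mulrN !mulNr !opprK (mulrC t r).
have [->//|/eqP gh] := eqVneq (h * g)%g (g * h)%g.
have sK a : (a * s * s = a)%g by rewrite -mulgA s_sqr mulg1.
rewrite (s_noncomm gh) !sK !addr0.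
by case: eqP => _; case: eqP => _; rewrite ?addr0 ?add0r // double_opp.
Qed.

Hypothesis fixed_comm : ~ R2sq_zero R -> commutative_set (fixed_set phi).

Lemma single_single_commute_b (r t : R) g h : phi g = g -> phi h = h ->
  r *+ 2 = 0 -> t *+ 2 = 0 -> gr_commute (single r g) (single t h).
Proof.
move=> gF hF r2 t2; have [R2sq|R2sq] := classic (R2sq_zero R).
  exact: single_commute_of_R2sq.
exact/single_commute_of_commute/fixed_comm.
Qed.

Lemma skew_commutative_b : skew_commutative R phi.
Proof.
apply: (skew_commutative_of_basic inv_phi).
- by move=> *; apply: pair_pair_commute_b.
- by move=> r t g h gN hF t2; apply: pair_single_commute t2 _; exact: fixed_rule_b.
- by move=> *; apply: single_single_commute_b.
Qed.

End ConverseB.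

Lemma two_elements_derived (G : groupType) : two_elements (derived G) ->
  exists2 s : G, s <> 1%g & forall z, derived G z <-> z = 1%g \/ z = s.
Proof.
move=> [a [b [ab derivedE]]].
have [a1|b1] := (derivedE 1%g).1 (gen_one _).
  by exists b => [b1|z]; [apply: ab; rewrite -a1 | rewrite derivedE a1].
by exists a => [a1|z]; [apply: ab; rewrite -b1 | rewrite derivedE b1 or_comm].
Qed.

Section ForwardCases.
Variables (R : comPzRingType) (G : groupType) (phi : G -> G).
Hypotheses (inv_phi : involution phi) (skew_comm : skew_commutative R phi).
Local Open Scope ring_scope.
Variable t : R.
Hypotheses (t2 : t *+ 2 = 0) (t_neq0 : t != 0).

(* Forward direction.  If all non-fixed elements commute, [K] is abelian and, [G] being
   non-abelian, [G_phi] is not commutative, so [R_2^2 = 0]. *)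
Lemma forward_case_a : nonabelian G ->
  (forall x y, phi x <> x -> phi y <> y -> x * y = y * x)%g ->
  commutative_set (Ksub phi) /\ R2sq_zero R.
Proof.
move=> nonab comN; split; first exact: gen_commutative.
have [//|R2sq] := classic (R2sq_zero R); exfalso.
have fixedR := forward_fixed_rule inv_phi skew_comm t2 t_neq0.
exact: fixed_noncommutative fixedR nonab comN (fixed_commute_of_R2 inv_phi skew_comm R2sq).
Qed.

Lemma forward_case_b (g h : G) : 2%:R != 0 :> R ->
  phi g <> g -> phi h <> h -> (g * h <> h * g)%g ->
  [/\ char_is R 4, two_elements (derived G),
      (forall x : G, derived G (x^-1 * phi x)%g),
      (forall x : G, fixed_set phi (x * x)%g)
    & (~ R2sq_zero R -> commutative_set (fixed_set phi))].
Proof.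
move=> two_ne0 gN hN gh.
have fixedR := forward_fixed_rule inv_phi skew_comm t2 t_neq0.
have nonfixedR := forward_nonfixed_rule inv_phi skew_comm t2 t_neq0 two_ne0.
have [_ _ _ four0] := forward_nonfixed inv_phi skew_comm t2 t_neq0 two_ne0 gN hN gh.
split.
- exact: char4 (one_neq0_of_2torsion t_neq0) two_ne0 (three_neq0_of_2torsion t2 t_neq0) four0.
- exact: (derived_two_elements inv_phi fixedR nonfixedR gN hN gh).
- exact: (defect_in_derived inv_phi nonfixedR gN hN gh).
- exact: (square_fixed inv_phi fixedR nonfixedR gN hN gh).
- exact: fixed_commute_of_R2 inv_phi skew_comm.
Qed.

End ForwardCases.

Theorem theorem2p5 (R : comPzRingType) (G : groupType) (phi : G -> G) :
  ~ char_is R 2 ->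
  (exists r : R, R2 r /\ r <> 0%R) ->
  nonabelian G ->
  involution phi ->
  (skew_commutative R phi <->
     (commutative_set (Ksub phi) /\ R2sq_zero R)
  \/ [/\ char_is R 4, two_elements (derived G),
         (forall g : G, derived G (g^-1 * phi g)%g),
         (forall g : G, fixed_set phi (g * g)%g)
       & (~ R2sq_zero R -> commutative_set (fixed_set phi))]).
Proof.
move=> not_char2 [t [t2 /eqP t_neq0]] nonab inv_phi.
have two_ne0 := two_neq0 (one_neq0_of_2torsion t_neq0) not_char2.
split=> [skew_comm | [[K_comm R2sq] | [[four0 _] /two_elements_derived [s s_neq1 derivedE]
                                       quotient_fixed _ fixed_comm]]].
- have [[g [h [gN hN gh]]] | no_pair] :=
    classic (exists g h : G, [/\ phi g <> g, phi h <> h & (g * h <> h * g)%g]).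
    by right; exact: (forward_case_b inv_phi skew_comm t2 t_neq0 two_ne0 gN hN gh).
  left; apply: (forward_case_a inv_phi skew_comm t2 t_neq0 nonab) => x y xN yN.
  by have [//|/eqP xy] := eqVneq (x * y)%g (y * x)%g; case: no_pair; exists x, y.
- exact: skew_commutative_a.
- exact: skew_commutative_b s_neq1 derivedE quotient_fixed four0 fixed_comm.
Qed.
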